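(* Assume the penalty $g$ satisfies A1–A3. Then for every $X=[x_1,\dots,x_n]\in\mathbb{R}^{m\times n}$ and $D\in\mathbb{R}^{m\times d}$, the constants $L_X(D)$, $C_X(D)$ defined with the norm $\|\cdot\|=\|\cdot\|_{1\to2}$ (and $C=1$) satisfy $$L_X(D)\le\frac1n\sum_{i=1}^n\sqrt{2f_{x_i}(D)}\,\bar g(f_{x_i}(D)),\qquad C_X(D)\le\frac1{2n}\sum_{i=1}^n\big[\bar g(f_{x_i}(D))\big]^2.$$
   Context: A penalty is a function $g:\mathbb{R}^d\to\mathbb{R}\cup\{+\infty\}$, not identically $+\infty$. A1: $g\ge0$; A2: $g$ lower semi-continuous; A3: $g(\alpha)\to+\infty$ as $\|\alpha\|\to\infty$. $\bar g(t)=\sup\{\|\alpha\|_1:\ g(\alpha)\le t\}$ ($\sup\emptyset=0$). $\mathcal{L}_x(D,\alpha)=\tfrac12\|x-D\alpha\|_2^2+g(\alpha)$, $f_x(D)=\inf_\alpha\mathcal{L}_x(D,\alpha)$. $\|\Delta\|_{1\to2}=\max_j\|\delta_j\|_2$, with dual norm $\|U\|_\star=\sup_{\|\Delta\|_{1\to2}\le1}\langle U,\Delta\rangle_F$. For $\epsilon>0$, $\mathfrak{A}_\epsilon(X,D)=\{A=[\alpha_1,\dots,\alpha_n]:\ \mathcal{L}_{x_i}(D,\alpha_i)\le f_{x_i}(D)+\epsilon\ \forall i\}$; $L_X(D)=\inf_{\epsilon>0}\sup_{A\in\mathfrak{A}_\epsilon(X,D)}\frac1n\|(X-DA)A^\top\|_\star$,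 $C_X(D)=\inf_{\epsilon>0}\sup_{A\in\mathfrak{A}_\epsilon(X,D)}\frac1{2n}\sum_i\|\alpha_i\|_1^2$. *)

From Stdlib Require Import Reals ClassicalEpsilon.
From mathcomp Require Import all_boot.
Set Implicit Arguments. Unset Strict Implicit. Unset Printing Implicit Defensive.
Local Open Scope R_scope.

Inductive Rbar := Fin (r : R) | PInf | MInf.

Definition Rbar_le (x y : Rbar) : Prop :=
  match x, y with
  | MInf, _ => True | _, PInf => True
  | Fin a, Fin b => a <= b
  | _, _ => False end.

Definition Rbar_lt (x y : Rbar) : Prop :=
  match x, y with
  | MInf, MInf => False | MInf, _ => True
  | PInf, _ => False
  | Fin _, PInf => True
  | Fin a, Fin b => a < b
  | Fin _, MInf => False end.

Definition Rbar_opp (x : Rbar) : Rbar :=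
  match x with Fin r => Fin (- r) | PInf => MInf | MInf => PInf end.

Definition Rbar_plus_r (x : Rbar) (e : R) : Rbar :=
  match x with Fin r => Fin (r + e) | y => y end.

(* c * x, with the convention 0 * (+-oo) = 0 *)
Definition Rbar_scal (c : R) (x : Rbar) : Rbar :=
  match x with
  | Fin r => Fin (c * r)
  | PInf => if Rlt_dec 0 c then PInf else if Rlt_dec c 0 then MInf else Fin 0
  | MInf => if Rlt_dec 0 c then MInf else if Rlt_dec c 0 then PInf else Fin 0
  end.

(* supremum in the extended reals of a set of reals (sup of the empty set = -oo) *)
Definition sup_R (E : R -> Prop) : Rbar :=
  match excluded_middle_informative (exists x, E x) with
  | left ne =>
      match excluded_middle_informative (bound E) with
      | left b => Fin (proj1_sig (completeness E b ne))
      | right _ => PInf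
      end
  | right _ => MInf
  end.

Definition Rbar_sup (E : Rbar -> Prop) : Rbar :=
  if excluded_middle_informative (E PInf) then PInf
  else sup_R (fun r => E (Fin r)).

Definition Rbar_inf (E : Rbar -> Prop) : Rbar :=
  Rbar_opp (Rbar_sup (fun x => E (Rbar_opp x))).

Definition Vec (k : nat) := 'I_k -> R.
Definition Mat (a b : nat) := 'I_a -> 'I_b -> R.

Definition rsum (k : nat) (F : 'I_k -> R) : R := \big[Rplus/0]_(i < k) F i.

Definition norm2 k (v : Vec k) : R := sqrt (rsum (fun i => v i ^ 2)).
Definition norm1 k (v : Vec k) : R := rsum (fun i => Rabs (v i)).
Definition vsub k (u v : Vec k) : Vec k := fun i => u i - v i.

Definition col a b (M : Mat a b) (j : 'I_b) : Vec a := fun r => M r j.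

Definition mulmv m d (D : Mat m d) (al : Vec d) : Vec m :=
  fun r => rsum (fun j => D r j * al j).

Definition frob a b (U V : Mat a b) : R := rsum (fun r => rsum (fun j => U r j * V r j)).

Definition norm12 a b (M : Mat a b) : R := \big[Rmax/0]_(j < b) norm2 (col M j).

Definition dualnorm12 a b (U : Mat a b) : Rbar :=
  sup_R (fun s => exists Dl : Mat a b, norm12 Dl <= 1 /\ s = frob U Dl).

Definition is_penalty d (g : Vec d -> Rbar) : Prop :=
  (forall al, g al <> MInf) /\ (exists al r, g al = Fin r).

Definition penA1 d (g : Vec d -> Rbar) : Prop := forall al, Rbar_le (Fin 0) (g al).

Definition penA2 d (g : Vec d -> Rbar) : Prop :=
  forall (al : Vec d) (t : R), Rbar_lt (Fin t) (g al) ->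
    exists delta, 0 < delta /\
      forall be : Vec d, norm2 (vsub be al) < delta -> Rbar_lt (Fin t) (g be).

Definition penA3 d (g : Vec d -> Rbar) : Prop :=
  forall M : R, exists rho : R, forall al : Vec d, rho < norm2 al -> Rbar_lt (Fin M) (g al).

(* gbar(t) = sup { ||alpha||_1 : g(alpha) <= t }, sup of the empty set = 0 *)
Definition gbar d (g : Vec d -> Rbar) (t : R) : Rbar :=
  let E := fun s => exists al, Rbar_le (g al) (Fin t) /\ s = norm1 al in
  if excluded_middle_informative (exists s, E s) then sup_R E else Fin 0.

Definition Lx m d (g : Vec d -> Rbar) (x : Vec m) (D : Mat m d) (al : Vec d) : Rbar :=
  match g al with
  | Fin r => Fin (/2 * norm2 (vsub x (mulmv D al)) ^ 2 + r)
  | PInf => PInf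
  | MInf => MInf
  end.

Definition fx m d (g : Vec d -> Rbar) (x : Vec m) (D : Mat m d) : Rbar :=
  Rbar_inf (fun v => exists al, v = Lx g x D al).

(* A = [alpha_1..alpha_n] in frak A_eps(X,D), stored as its family of columns *)
Definition inAeps m n d (g : Vec d -> Rbar) (eps : R) (X : Mat m n) (D : Mat m d)
    (A : 'I_n -> Vec d) : Prop :=
  forall i, Rbar_le (Lx g (col X i) D (A i)) (Rbar_plus_r (fx g (col X i) D) eps).

(* (X - D A) A^T, an m x d matrix *)
Definition residcorr m n d (X : Mat m n) (D : Mat m d) (A : 'I_n -> Vec d) : Mat m d :=
  fun r j => rsum (fun i => (X r i - mulmv D (A i) r) * A i j).

Definition LX m n d (g : Vec d -> Rbar) (X : Mat m n) (D : Mat m d) : Rbar :=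
  Rbar_inf (fun v => exists eps, 0 < eps /\
    v = Rbar_sup (fun w => exists A, inAeps g eps X D A /\
                      w = Rbar_scal (/ INR n) (dualnorm12 (residcorr X D A)))).

Definition CX m n d (g : Vec d -> Rbar) (X : Mat m n) (D : Mat m d) : Rbar :=
  Rbar_inf (fun v => exists eps, 0 < eps /\
    v = Rbar_sup (fun w => exists A, inAeps g eps X D A /\
                      w = Fin (/ (2 * INR n) * rsum (fun i => norm1 (A i) ^ 2)))).

(* Let alpha be an eps-minimizer of L_{x}(D, .), and f = f_x(D) >= 0.  Since
   g >= 0, the residual satisfies ||x - D alpha||_2 <= sqrt(2 (f + eps)), and since the
   loss is >= 0, g(alpha) <= f + eps.  Coercivity (A3) and lower semicontinuity (A2)
   make the bound ||alpha||_1 <= gbar(f) stable: {g <= f + eps} has l1 norm at most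
   gbar(f) + del for eps small (a compactness argument).  Hence, as eps -> 0, every
   column of A in frak A_eps(X, D) obeys ||alpha_i||_1 ||r_i||_2 <= sqrt(2 f_i) gbar(f_i)
   + eta and ||alpha_i||_1^2 <= gbar(f_i)^2 + eta.  Finally, on the unit ball of
   ||.||_{1->2}, <(X - DA)A^T, Delta>_F <= sum_i ||alpha_i||_1 ||r_i||_2 by
   Cauchy-Schwarz, which bounds the dual norm; averaging gives both inequalities. *)

From Stdlib Require Import Reals Lra Lia ClassicalEpsilon Classical.
From HB Require Import structures.
From mathcomp Require Import all_boot.
Set Implicit Arguments. Unset Strict Implicit. Unset Printing Implicit Defensive.
Local Open Scope R_scope.

(* (R, +, 0) as a commutative monoid, so that the generic big-operator lemmas apply to rsum. *)
HB.instance Definition _ :=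
  Monoid.isComLaw.Build R 0 Rplus (fun a b c => esym (Rplus_assoc a b c)) Rplus_comm Rplus_0_l.

Section FiniteSums.
Variable k : nat.
Implicit Types F G : 'I_k -> R.

Lemma rsum_le F G : (forall i, F i <= G i) -> rsum F <= rsum G.
Proof. by move=> H; apply: (big_ind2 Rle) => // *; lra. Qed.

Lemma rsum_ge0 F : (forall i, 0 <= F i) -> 0 <= rsum F.
Proof. by move=> H; apply: (big_ind (fun x => 0 <= x)) => // *; lra. Qed.

Lemma rsum_ext F G : (forall i, F i = G i) -> rsum F = rsum G.
Proof. by move=> H; apply: eq_bigr. Qed.

Lemma rsum_add F G : rsum (fun i => F i + G i) = rsum F + rsum G.
Proof. exact: big_split. Qed.

Lemma rsum_mull F c : rsum (fun i => c * F i) = c * rsum F.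
Proof. by symmetry; apply: (big_morph (fun x => c * x)) => [x y|] /=; ring. Qed.

Lemma rsum_mulr F c : rsum (fun i => F i * c) = rsum F * c.
Proof. by symmetry; apply: (big_morph (fun x => x * c)) => [x y|] /=; ring. Qed.

Lemma rsum_const c : rsum (fun _ : 'I_k => c) = INR k * c.
Proof.
rewrite /rsum big_const_ord; elim: k => [|j IH]; first by rewrite /=; ring.
by rewrite iterS IH S_INR; ring.
Qed.

Lemma rsum_term_le F j : (forall i, 0 <= F i) -> F j <= rsum F.
Proof.
move=> H; rewrite /rsum (bigD1 j) //= -[X in X <= _]Rplus_0_r.
apply: Rplus_le_compat_l.
by apply: (big_ind (fun x => 0 <= x)) => [|*|i _]; [lra | lra | exact: H].
Qed.

Lemma bigmax_ge F j : F j <= \big[Rmax/0]_(i < k) F i.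
Proof.
have : j \in index_enum 'I_k by rewrite mem_index_enum.
elim: (index_enum _) => [|a r IH] //; rewrite in_cons big_cons => /orP[/eqP <-|/IH h].
- exact: Rmax_l.
- exact: Rle_trans h (Rmax_r _ _).
Qed.

Lemma bigmin_le F j : \big[Rmin/1]_(i < k) F i <= F j.
Proof.
have : j \in index_enum 'I_k by rewrite mem_index_enum.
elim: (index_enum _) => [|a r IH] //; rewrite in_cons big_cons => /orP[/eqP <-|/IH h].
- exact: Rmin_l.
- exact: Rle_trans (Rmin_r _ _) h.
Qed.

Lemma bigmin_gt0 F : (forall i, 0 < F i) -> 0 < \big[Rmin/1]_(i < k) F i.
Proof.
move=> H; apply: (big_ind (fun x => 0 < x)) => //; first lra.
by move=> x y; apply: Rmin_pos.
Qed.

End FiniteSums.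

Lemma rsum_swap a b (F : 'I_a -> 'I_b -> R) :
  rsum (fun i => rsum (fun j => F i j)) = rsum (fun j => rsum (fun i => F i j)).
Proof. exact: exchange_big. Qed.

Section Norms.
Variable k : nat.
Implicit Types a b : Vec k.

Lemma norm2_ge0 a : 0 <= norm2 a.
Proof. exact: sqrt_pos. Qed.

Lemma norm2_sq a : norm2 a ^ 2 = rsum (fun i => a i ^ 2).
Proof. by rewrite /norm2 pow2_sqrt //; apply: rsum_ge0 => i; apply: pow2_ge_0. Qed.

Lemma abs_le_norm2 a i : Rabs (a i) <= norm2 a.
Proof.
rewrite -(sqrt_pow2 (Rabs (a i))); last exact: Rabs_pos.
rewrite /norm2; apply: sqrt_le_1_alt; rewrite pow2_abs.
by apply: (rsum_term_le (F := fun i => a i ^ 2)) => j; apply: pow2_ge_0.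
Qed.

(* 2xy <= t x^2 + y^2 / t, the pointwise inequality behind Cauchy-Schwarz. *)
Lemma weighted_amgm x y t : 0 < t -> x * y <= /2 * (t * x ^ 2) + /2 * (/ t * y ^ 2).
Proof.
move=> ht.
have E : /2 * (t * x ^ 2) + /2 * (/ t * y ^ 2) - x * y = / (2 * t) * (t * x - y) ^ 2
  by field; lra.
have : 0 <= / (2 * t) * (t * x - y) ^ 2
  by apply: Rmult_le_pos; [apply/Rlt_le/Rinv_0_lt_compat; lra | apply: pow2_ge_0].
lra.
Qed.

Lemma norm2_eq0_inner a b : norm2 a = 0 -> rsum (fun i => a i * b i) = 0.
Proof.
move=> h0; apply: big1 => i _.
have : Rabs (a i) <= 0 by rewrite -h0; exact: abs_le_norm2.
move=> h; have -> : a i = 0.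
  by have := Rle_abs (a i); have := Rle_abs (- a i); rewrite Rabs_Ropp; lra.
ring.
Qed.

Lemma cauchy_schwarz a b : rsum (fun i => a i * b i) <= norm2 a * norm2 b.
Proof.
set A := norm2 a; set B := norm2 b.
have [hA0|hA] := Req_dec A 0; first by rewrite norm2_eq0_inner // hA0; lra.
have [hB0|hB] := Req_dec B 0.
  rewrite (rsum_ext (G := fun i => b i * a i)) => [|i]; last by ring.
  by rewrite norm2_eq0_inner // hB0; lra.
have Apos : 0 < A by have := norm2_ge0 a; rewrite -/A; lra.
have Bpos : 0 < B by have := norm2_ge0 b; rewrite -/B; lra.
have ht : 0 < B / A by apply: Rdiv_lt_0_compat.
apply: Rle_trans (rsum_le (fun i => weighted_amgm (a i) (b i) ht)) _.
rewrite rsum_add !rsum_mull -!norm2_sq -/A -/B.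
by right; field; lra.
Qed.

Lemma cauchy_schwarz_abs a b : Rabs (rsum (fun i => a i * b i)) <= norm2 a * norm2 b.
Proof.
apply: Rabs_le; split; last exact: cauchy_schwarz.
have -> : norm2 a = norm2 (fun i => - a i).
  by congr sqrt; apply: rsum_ext => i; ring.
have := cauchy_schwarz (fun i => - a i) b.
rewrite (rsum_ext (G := fun i => -1 * (a i * b i))) => [|i]; last by ring.
by rewrite rsum_mull; lra.
Qed.

Lemma norm1_ge0 a : 0 <= norm1 a.
Proof. by apply: rsum_ge0 => i; exact: Rabs_pos. Qed.

Lemma norm2_le_norm1 a : norm2 a <= norm1 a.
Proof.
rewrite -(sqrt_pow2 (norm1 a)); last exact: norm1_ge0.
apply: sqrt_le_1_alt; rewrite /= Rmult_1_r -rsum_mulr.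
apply: rsum_le => i.
have hi : Rabs (a i) <= norm1 a
  by apply: (rsum_term_le (F := fun i => Rabs (a i))) => j; exact: Rabs_pos.
have sq : Rabs (a i) * Rabs (a i) = a i * a i
  by rewrite -Rabs_mult Rabs_pos_eq //; apply: Rle_0_sqr.
have := Rabs_pos (a i); nra.
Qed.

Lemma norm1_le_norm2 a : norm1 a <= INR k * norm2 a.
Proof. by rewrite -rsum_const; apply: rsum_le => i; exact: abs_le_norm2. Qed.

Lemma norm1_triangle a b : norm1 a <= norm1 b + norm1 (vsub a b).
Proof.
rewrite /norm1 -rsum_add; apply: rsum_le => i; rewrite /vsub.
by have := Rabs_triang (b i) (a i - b i); rewrite Rplus_minus.
Qed.

End Norms.

Lemma sqrt_add_le a b : 0 <= a -> 0 <= b -> sqrt (a + b) <= sqrt a + sqrt b.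
Proof.
move=> ha hb; have hsa := sqrt_pos a; have hsb := sqrt_pos b.
rewrite -(sqrt_pow2 (sqrt a + sqrt b)); last lra.
apply: sqrt_le_1_alt.
have := sqrt_sqrt a ha; have := sqrt_sqrt b hb; nra.
Qed.

(* Continuity of (a, b) |-> (a b, a^2) at (A, B), in the explicit form used to turn
   "a <= A + del, b <= B + del" into bounds with a prescribed slack eta. *)
Lemma product_perturbation A B eta : 0 <= A -> 0 <= B -> 0 < eta ->
  exists del, 0 < del /\ forall a b, 0 <= a -> 0 <= b -> a <= A + del -> b <= B + del ->
    a * b <= A * B + eta /\ a ^ 2 <= A ^ 2 + eta.
Proof.
move=> hA hB heta; set c := 2 * A + B + 2.
have hc : 0 < c by rewrite /c; lra.
have hq : 0 < eta / c by apply: Rdiv_lt_0_compat.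
exists (Rmin 1 (eta / c)); split; first by apply: Rmin_pos; lra.
set del := Rmin 1 (eta / c) => a b ha hb hal hbl.
have hdel0 : 0 < del by apply: Rmin_pos; lra.
have hdel1 : del <= 1 := Rmin_l _ _.
have hdelc : del * c <= eta.
  have -> : eta = eta / c * c by field; lra.
  by apply: Rmult_le_compat_r; [lra | exact: Rmin_r].
split.
- have : a * b <= (A + del) * (B + del) by apply: Rmult_le_compat.
  rewrite /c in hdelc; nra.
- have : a * a <= (A + del) * (A + del) by apply: Rmult_le_compat.
  rewrite /c in hdelc; rewrite /= !Rmult_1_r; nra.
Qed.

Tactic Notation "case_em" "=>" simple_intropattern(p) :=
  match goal with |- context [excluded_middle_informative ?P] =>
    destruct (excluded_middle_informative P) as p end.

Lemma sup_R_spec (E : R -> Prop) x : E x -> bound E ->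
  exists s, sup_R E = Fin s /\ is_lub E s.
Proof.
move=> Ex hb; rewrite /sup_R.
case_em => [ne|nne]; last by case: nne; exists x.
case_em => [b|nb]; last by [].
by exists (proj1_sig (completeness E b ne)); split => //; exact: proj2_sig.
Qed.

Lemma sup_R_le (E : R -> Prop) b : (forall x, E x -> x <= b) -> Rbar_le (sup_R E) (Fin b).
Proof.
move=> H; case: (classic (exists x, E x)) => [[x Ex]|ne].
- have [s [-> [_ hl]]] := sup_R_spec Ex (ex_intro _ b H).
  exact: hl.
- by rewrite /sup_R; case_em => [e|_]; first case: ne.
Qed.

Lemma Rbar_sup_le (E : Rbar -> Prop) b :
  (forall w, E w -> Rbar_le w (Fin b)) -> Rbar_le (Rbar_sup E) (Fin b).
Proof.
move=> H; rewrite /Rbar_sup; case_em => [hp|hnp]; first exact: H.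
by apply: sup_R_le => x /H.
Qed.

Lemma Rbar_inf_le (E : Rbar -> Prop) b :
  (forall eta, 0 < eta -> exists v, E v /\ Rbar_le v (Fin (b + eta))) ->
  Rbar_le (Rbar_inf E) (Fin b).
Proof.
move=> H; rewrite /Rbar_inf /Rbar_sup; case_em => [hp|hnp]; first by [].
have fin : forall eta, 0 < eta -> exists r, E (Rbar_opp (Fin (- r))) /\ r <= b + eta.
  move=> eta he; have [[r| |] [Ev hv]] := H eta he.
  - by exists r; rewrite /= Ropp_involutive.
  - by [].
  - by case: hnp.
have [r0 [E0 _]] := fin 1 Rlt_0_1.
case: (classic (bound (fun r => E (Rbar_opp (Fin r))))) => [hb|nb].
- have [s [-> [hu _]]] := sup_R_spec E0 hb.
  apply: Rle_plus_epsilon => eps he.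
  have [r [Er hr]] := fin eps he.
  by have := hu _ Er; rewrite /=; lra.
- rewrite /sup_R; case_em => [ne|nne]; last by case: nne; exists (- r0).
  by case_em => [hb|_].
Qed.

Lemma Rbar_lt_le (v : Rbar) a b : Rbar_lt (Fin a) v -> Rbar_le v (Fin b) -> a < b.
Proof. by case: v => [r| |] //=; lra. Qed.

Lemma Rbar_le_fin_trans (v : Rbar) a b : Rbar_le v (Fin a) -> a <= b -> Rbar_le v (Fin b).
Proof. by case: v => [r| |] //=; lra. Qed.

Definition strictly_increasing (phi : nat -> nat) : Prop :=
  forall q, (phi q < phi (S q))%coq_nat.

Definition vec_cvg d (w : nat -> Vec d) (l : Vec d) : Prop :=
  forall eta, 0 < eta -> exists N, forall q, (N <= q)%coq_nat -> norm1 (vsub (w q) l) < eta.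

Lemma inv_succ_small eps : 0 < eps ->
  exists N : nat, forall n : nat, (N <= n)%coq_nat -> / (INR n + 1) < eps.
Proof.
move=> he; have [N [hN hpos]] := archimed_cor1 eps he; exists N => n hn.
have h0 : 0 < INR N by apply: lt_0_INR.
have h1 : INR N <= INR n by apply: le_INR.
by apply: Rle_lt_trans _ hN; apply: Rinv_le_contravar => //; lra.
Qed.

Lemma strictly_increasing_ge phi : strictly_increasing phi -> forall q, (q <= phi q)%coq_nat.
Proof. by move=> H; elim=> [|q IH]; [lia | have := H q; lia]. Qed.

Lemma strictly_increasing_comp phi psi :
  strictly_increasing phi -> strictly_increasing psi -> strictly_increasing (fun q => phi (psi q)).
Proof.
move=> hphi hpsi q.
have mono : forall a b, (a < b)%coq_nat -> (phi a < phi b)%coq_nat.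
  move=> a; elim=> [|b IH] hab; first lia.
  have := hphi b; case: (Nat.eq_dec a b) => [->|hne]; first lia.
  by have := IH ltac:(lia); lia.
exact: mono (hpsi q).
Qed.

Lemma Un_cv_subseq (v : nat -> R) c psi :
  Un_cv v c -> strictly_increasing psi -> Un_cv (fun q => v (psi q)) c.
Proof.
move=> H /strictly_increasing_ge hpsi eps he; have [N HN] := H eps he.
by exists N => n hn; apply: HN; have := hpsi n; rewrite /ge in hn *; lia.
Qed.

Lemma bounded_real_subseq (u : nat -> R) rho : (forall k, Rabs (u k) <= rho) ->
  exists psi c, strictly_increasing psi /\ Un_cv (fun q => u (psi q)) c.
Proof.
move=> hb.
have inK : forall k, - rho <= u k <= rho.
  by move=> k; have := hb k; have := Rle_abs (u k); have := Rle_abs (- u k);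
     rewrite Rabs_Ropp; lra.
have [c hc] := @Bolzano_Weierstrass u _ (compact_P3 (- rho) rho) inK.
have near : forall N k : nat, exists p, (N <= p)%coq_nat /\ Rabs (u p - c) < / (INR k + 1).
  move=> N k.
  have hp : 0 < / (INR k + 1) by apply: Rinv_0_lt_compat; have := pos_INR k; lra.
  have [p [hp1 hp2]] :=
    hc (disc c (mkposreal _ hp)) N (ex_intro _ (mkposreal _ hp) (fun y h => h)).
  by exists p.
pose pick N k := proj1_sig (constructive_indefinite_description _ (near N k)).
have hpick N k : (N <= pick N k)%coq_nat /\ Rabs (u (pick N k) - c) < / (INR k + 1)
  := proj2_sig (constructive_indefinite_description _ (near N k)).
pose psi := fix psi (q : nat) : nat :=
  match q with 0 => pick 0%nat 0%nat | S q' => pick (S (psi q')) (S q') end.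
have close : forall q, Rabs (u (psi q) - c) < / (INR q + 1)
  by case=> [|q]; exact: (hpick _ _).2.
exists psi, c; split; first by move=> q; have := (hpick (S (psi q)) (S q)).1; rewrite /=; lia.
move=> eps he; have [N HN] := inv_succ_small he; exists N => n hn.
exact: Rlt_trans (close n) (HN n hn).
Qed.

(* Bolzano-Weierstrass in R^d: a coordinatewise bounded sequence of vectors has a
   convergent subsequence, obtained by extracting one coordinate at a time. *)
Lemma bounded_vec_subseq_coords d (u : nat -> Vec d) rho : (forall k i, Rabs (u k i) <= rho) ->
  forall K, exists phi (l : Vec d), strictly_increasing phi /\
    forall i : 'I_d, (i < K)%N -> Un_cv (fun q => u (phi q) i) (l i).
Proof.
move=> hb; elim=> [|K [phi [l [hphi hl]]]]; first by exists id, (fun _ => 0); split => // q; lia.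
case: (ltnP K d) => hK; last first.
  by exists phi, l; split => // i hi; apply: hl; apply: leq_trans (ltn_ord i) hK.
pose i0 := Ordinal hK.
have [psi [c [hpsi hc]]] := bounded_real_subseq (fun k => hb (phi k) i0).
exists (fun q => phi (psi q)), (fun i : 'I_d => if (i < K)%N then l i else c); split.
  exact: strictly_increasing_comp.
move=> i; rewrite ltnS leq_eqVlt => /orP [/eqP hi|hi].
- have -> : i = i0 by apply: val_inj.
  by rewrite /= ltnn.
- by rewrite hi; apply: (Un_cv_subseq (v := fun q => u (phi q) i)) => //; exact: hl.
Qed.

Lemma coords_cvg_vec_cvg d (w : nat -> Vec d) (l : Vec d) :
  (forall i, Un_cv (fun q => w q i) (l i)) -> vec_cvg w l.
Proof.
move=> H.
suff gen : forall r : seq 'I_d, forall eta, 0 < eta -> exists N, forall q, (N <= q)%coq_nat ->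
    \big[Rplus/0]_(i <- r) Rabs (w q i - l i) < eta by exact: gen.
elim=> [|j r IH] eta he; first by exists 0%nat => q _; rewrite big_nil.
have he2 : eta / 2 > 0 by lra.
have [N1 H1] := H j _ he2; have [N2 H2] := IH _ he2.
exists (Nat.max N1 N2) => q hq; rewrite big_cons.
by have := H1 q ltac:(rewrite /ge; lia); have := H2 q ltac:(lia); rewrite /Rdist; lra.
Qed.

Lemma bounded_vec_subseq d (u : nat -> Vec d) rho : (forall k i, Rabs (u k i) <= rho) ->
  exists phi (l : Vec d), strictly_increasing phi /\ vec_cvg (fun q => u (phi q)) l.
Proof.
move=> hb; have [phi [l [hphi hl]]] := bounded_vec_subseq_coords hb d.
by exists phi, l; split => //; apply: coords_cvg_vec_cvg => i; apply: hl.
Qed.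

Lemma vec_cvg_norm1_ge d (w : nat -> Vec d) l c :
  vec_cvg w l -> (forall q, c <= norm1 (w q)) -> c <= norm1 l.
Proof.
move=> hcv hc; apply: Rle_plus_epsilon => eps he; have [N HN] := hcv eps he.
by have := HN N (le_n _); have := norm1_triangle (w N) l; have := hc N; lra.
Qed.

Section Penalty.
Variables (d : nat) (g : Vec d -> Rbar).
Hypotheses (hpen : is_penalty g) (hA1 : penA1 g) (hA2 : penA2 g) (hA3 : penA3 g).

Lemma Lx_sublevel m (x : Vec m) (D : Mat m d) al t : Rbar_le (Lx g x D al) (Fin t) ->
  exists r, g al = Fin r /\ 0 <= r /\ /2 * norm2 (vsub x (mulmv D al)) ^ 2 + r <= t.
Proof.
case: hpen => [hnm _]; rewrite /Lx; case E: (g al) => [r| |] //=; last by have := hnm al E.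
by move=> h; exists r; split => //; split => //; have := hA1 al; rewrite E.
Qed.

(* f_x(D) is a finite nonnegative real: the objective is bounded below by 0 and
   finite at some point. *)
Lemma fx_finite m (x : Vec m) (D : Mat m d) : exists f, fx g x D = Fin f /\ 0 <= f.
Proof.
case: hpen => [hnm [al0 [r0 h0]]]; rewrite /fx /Rbar_inf /Rbar_sup.
case_em => [hp|hnp].
  by exfalso; case: hp => al; rewrite /Lx; case E: (g al) => [r| |] //= _; exact: (hnm al E).
have ub : forall r, (exists al, Rbar_opp (Fin r) = Lx g x D al) -> r <= 0.
  move=> r [al]; rewrite /Lx; case E: (g al) => [r'| |] //=; try by have := hnm al E.
  move=> [hr]; have := hA1 al; rewrite E /= => h.
  by have := pow2_ge_0 (norm2 (vsub x (mulmv D al))); lra.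
have E0 : exists al, Rbar_opp (Fin (- (/2 * norm2 (vsub x (mulmv D al0)) ^ 2 + r0)))
   = Lx g x D al by exists al0; rewrite /Lx h0 /= Ropp_involutive.
have [s [-> [hu hl]]] := sup_R_spec E0 (ex_intro _ 0 ub).
by exists (- s); split => //; have := hl 0 ub; lra.
Qed.

Lemma sublevel_bounded t : exists rho, forall al, Rbar_le (g al) (Fin t) -> norm2 al <= rho.
Proof.
have [rho Hr] := hA3 t; exists rho => al hal.
by apply: Rnot_lt_le => hlt; have := Rbar_lt_le (Hr al hlt) hal; lra.
Qed.

Lemma gbar_finite t : exists G, gbar g t = Fin G /\ 0 <= G /\
    (forall al, Rbar_le (g al) (Fin t) -> norm1 al <= G).
Proof.
have [rho Hr] := sublevel_bounded t.
have hb : bound (fun s => exists al, Rbar_le (g al) (Fin t) /\ s = norm1 al).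
  exists (INR d * rho) => s [al [hal ->]].
  apply: Rle_trans (norm1_le_norm2 al) _.
  by apply: Rmult_le_compat_l; [exact: pos_INR | exact: Hr].
rewrite /gbar; case_em => [[s0 Es0]|nne].
- have [G [-> [hu _]]] := sup_R_spec Es0 hb.
  exists G; split => //; split.
    by case: (Es0) => al [_ e0]; apply: Rle_trans (norm1_ge0 al) _; rewrite -e0; exact: hu.
  by move=> al hal; apply: hu; exists al.
- exists 0; split => //; split; first lra.
  by move=> al hal; case: nne; exists (norm1 al), al.
Qed.

Lemma sublevel_limit (w : nat -> Vec d) l f : vec_cvg w l ->
  (forall t, f < t -> exists N, forall q, (N <= q)%coq_nat -> Rbar_le (g (w q)) (Fin t)) ->
  Rbar_le (g l) (Fin f).
Proof.
move=> hcv hev; apply: NNPP => hnot.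
have [t [ht ht2]] : exists t, f < t /\ Rbar_lt (Fin t) (g l).
  move: hnot; case: (g l) => [r| |] /= hnot.
  - by exists ((f + r) / 2); split; lra.
  - by exists (f + 1); split => //; lra.
  - by case: hnot.
have [delta [hdel0 Hd]] := hA2 ht2.
have [N1 HN1] := hcv delta hdel0.
have [N2 HN2] := hev t ht.
pose q := Nat.max N1 N2.
have hq : Rbar_lt (Fin t) (g (w q)).
  by apply: Hd; apply: Rle_lt_trans (norm2_le_norm1 _) (HN1 q ltac:(lia)).
by have := Rbar_lt_le hq (HN2 q ltac:(lia)); lra.
Qed.

(* Key stability property of gbar: if G bounds the l1 norm on {g <= f}, then for every
   del > 0 the slightly larger sublevel set {g <= f + eps} has l1 norm at most G + del
   for some eps > 0.  Proof by contradiction via compactness and A2. *)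
Lemma sublevel_norm1_stable f G : (forall al, Rbar_le (g al) (Fin f) -> norm1 al <= G) ->
  forall del, 0 < del -> exists eps, 0 < eps /\
    forall al, Rbar_le (g al) (Fin (f + eps)) -> norm1 al <= G + del.
Proof.
move=> hG del hdel; apply: NNPP => Hn.
have bad : forall k : nat, exists al,
    Rbar_le (g al) (Fin (f + / (INR k + 1))) /\ G + del < norm1 al.
  move=> k; apply: NNPP => Hk; apply: Hn; exists (/ (INR k + 1)); split.
    by apply: Rinv_0_lt_compat; have := pos_INR k; lra.
  by move=> al hal; apply: Rnot_lt_le => hlt; apply: Hk; exists al.
pose u k := proj1_sig (constructive_indefinite_description _ (bad k)).
have hu k : Rbar_le (g (u k)) (Fin (f + / (INR k + 1))) /\ G + del < norm1 (u k)
  := proj2_sig (constructive_indefinite_description _ (bad k)).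
have inv_le1 k : / (INR k + 1) <= 1.
  by rewrite -Rinv_1; apply: Rinv_le_contravar; [lra | have := pos_INR k; lra].
have [rho Hrho] := sublevel_bounded (f + 1).
have hb : forall k i, Rabs (u k i) <= rho.
  move=> k i; apply: Rle_trans (abs_le_norm2 _ _) (Hrho _ _).
  by apply: Rbar_le_fin_trans (hu k).1 _; have := inv_le1 k; lra.
have [phi [l [hphi hcv]]] := bounded_vec_subseq hb.
have hl : Rbar_le (g l) (Fin f).
  apply: (sublevel_limit hcv) => t ht.
  have [N HN] := @inv_succ_small (t - f) ltac:(lra).
  exists N => q hq; apply: Rbar_le_fin_trans (hu (phi q)).1 _.
  by have := HN (phi q) ltac:(have := strictly_increasing_ge hphi q; lia); lra.
have := vec_cvg_norm1_ge hcv (fun q => Rlt_le _ _ (hu (phi q)).2).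
by have := hG l hl; lra.
Qed.

(* The residual is controlled by
   ||x - D alpha||_2^2 <= 2 (f + eps) (since g >= 0), the penalty by g(alpha) <= f + eps. *)
Lemma near_minimizer_bound m (x : Vec m) (D : Mat m d) f G eta :
  0 <= f -> 0 <= G -> (forall al, Rbar_le (g al) (Fin f) -> norm1 al <= G) -> 0 < eta ->
  exists e0, 0 < e0 /\ forall al, Rbar_le (Lx g x D al) (Fin (f + e0)) ->
    norm1 al * norm2 (vsub x (mulmv D al)) <= sqrt (2 * f) * G + eta /\
    norm1 al ^ 2 <= G ^ 2 + eta.
Proof.
move=> hf hG hGb heta.
have [del [hdel Hprod]] := product_perturbation hG (sqrt_pos (2 * f)) heta.
have [eps [heps Hstab]] := sublevel_norm1_stable hGb hdel.
have he0 : 0 < Rmin eps (del ^ 2 / 2) by apply: Rmin_pos => //; nra.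
exists (Rmin eps (del ^ 2 / 2)); split => // al.
have he1 : Rmin eps (del ^ 2 / 2) <= eps := Rmin_l _ _.
have he2 : Rmin eps (del ^ 2 / 2) <= del ^ 2 / 2 := Rmin_r _ _.
set e := Rmin eps (del ^ 2 / 2) in he0 he1 he2 * => hal.
have [r [hr [hr0 hle]]] := Lx_sublevel hal.
have hN := norm2_ge0 (vsub x (mulmv D al)).
have penalty_small : norm1 al <= G + del.
  by apply: Hstab; rewrite hr /=; nra.
have residual_small : norm2 (vsub x (mulmv D al)) <= sqrt (2 * f) + del.
  have h1 : norm2 (vsub x (mulmv D al)) <= sqrt (2 * f + 2 * e).
    by rewrite -(sqrt_pow2 _ hN); apply: sqrt_le_1_alt; lra.
  have h2 := @sqrt_add_le (2 * f) (2 * e) ltac:(lra) ltac:(lra).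
  have h3 : sqrt (2 * e) <= del.
    by rewrite -(sqrt_pow2 del); [apply: sqrt_le_1_alt; lra | lra].
  lra.
rewrite (Rmult_comm (sqrt _)).
exact: Hprod _ _ (norm1_ge0 al) hN penalty_small residual_small.
Qed.

(* All n samples at once: the minimum of the per-sample tolerances works for every
   column of every A in frak A_eps(X, D). *)
Lemma near_minimizers_bound m n (X : Mat m n) (D : Mat m d) (f G : 'I_n -> R) eta :
  (forall i, fx g (col X i) D = Fin (f i)) -> (forall i, 0 <= f i) -> (forall i, 0 <= G i) ->
  (forall i al, Rbar_le (g al) (Fin (f i)) -> norm1 al <= G i) -> 0 < eta ->
  exists eps, 0 < eps /\ forall A, inAeps g eps X D A -> forall i,
    norm1 (A i) * norm2 (vsub (col X i) (mulmv D (A i))) <= sqrt (2 * f i) * G i + eta /\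
    norm1 (A i) ^ 2 <= G i ^ 2 + eta.
Proof.
move=> hfx hf hG hGb heta.
have ex i := near_minimizer_bound (col X i) D (hf i) (hG i) (hGb i) heta.
pose e0 i := proj1_sig (constructive_indefinite_description _ (ex i)).
have he0 i := proj2_sig (constructive_indefinite_description _ (ex i)).
exists (\big[Rmin/1]_(i < n) e0 i); split; first by apply: bigmin_gt0 => i; exact: (he0 i).1.
move=> A hA i; apply: (he0 i).2.
have := hA i; rewrite hfx /= => hAi.
by apply: Rbar_le_fin_trans hAi _; apply: Rplus_le_compat_l; exact: bigmin_le.
Qed.

End Penalty.

Section DualNorm.
Variables (m n d : nat) (X : Mat m n) (D : Mat m d) (A : 'I_n -> Vec d).

Let res (i : 'I_n) : Vec m := vsub (col X i) (mulmv D (A i)).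

Lemma frob_residcorr_expand (Dl : Mat m d) : frob (residcorr X D A) Dl =
  rsum (fun i => rsum (fun j => A i j * rsum (fun r => res i r * Dl r j))).
Proof.
rewrite /frob /residcorr.
transitivity (rsum (fun r => rsum (fun j => rsum (fun i => res i r * A i j * Dl r j)))).
  apply: rsum_ext => r; apply: rsum_ext => j; rewrite -rsum_mulr.
  by apply: rsum_ext => i; rewrite /res /vsub /col; ring.
transitivity (rsum (fun r => rsum (fun i => rsum (fun j => res i r * A i j * Dl r j)))).
  by apply: rsum_ext => r; exact: rsum_swap.
rewrite rsum_swap; apply: rsum_ext => i; rewrite rsum_swap.
by apply: rsum_ext => j; rewrite -rsum_mull; apply: rsum_ext => r; ring.
Qed.

(* On the unit ball of ||.||_{1->2}: |<r_i, delta_j>| <= ||r_i||_2, hence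
   <(X - DA)A^T, Delta>_F <= sum_i ||alpha_i||_1 ||r_i||_2. *)
Lemma frob_residcorr_le (Dl : Mat m d) : norm12 Dl <= 1 ->
  frob (residcorr X D A) Dl <= rsum (fun i => norm1 (A i) * norm2 (res i)).
Proof.
move=> hDl; rewrite frob_residcorr_expand; apply: rsum_le => i.
rewrite /norm1 -rsum_mulr; apply: rsum_le => j.
have hcol : norm2 (col Dl j) <= 1.
  by apply: Rle_trans hDl; exact: (bigmax_ge (fun j => norm2 (col Dl j))).
have inner : Rabs (rsum (fun r => res i r * Dl r j)) <= norm2 (res i).
  apply: Rle_trans (cauchy_schwarz_abs (res i) (col Dl j)) _.
  by have := norm2_ge0 (res i); have := norm2_ge0 (col Dl j); nra.
apply: Rle_trans (Rle_abs _) _; rewrite Rabs_mult.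
by apply: Rmult_le_compat_l; [exact: Rabs_pos | exact: inner].
Qed.

End DualNorm.

Lemma norm12_zero a b : norm12 (fun (_ : 'I_a) (_ : 'I_b) => 0) <= 1.
Proof.
apply: (big_ind (fun x => x <= 1)) => [|x y|j _]; [lra | exact: Rmax_lub |].
rewrite /norm2 /col (rsum_ext (G := fun _ => 0)) => [|i]; last by ring.
by rewrite rsum_const Rmult_0_r sqrt_0; lra.
Qed.

Lemma dualnorm12_le a b (U : Mat a b) B :
  (forall Dl, norm12 Dl <= 1 -> frob U Dl <= B) -> exists s, dualnorm12 U = Fin s /\ s <= B.
Proof.
move=> H; rewrite /dualnorm12.
have E0 : exists Dl : Mat a b, norm12 Dl <= 1 /\ frob U (fun _ _ => 0) = frob U Dl
  by exists (fun _ _ => 0); split => //; exact: norm12_zero.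
have hb : bound (fun s => exists Dl : Mat a b, norm12 Dl <= 1 /\ s = frob U Dl)
  by exists B => s [Dl [h ->]]; exact: H.
have [s [-> [_ hl]]] := sup_R_spec E0 hb.
by exists s; split => //; apply: hl => s' [Dl [h ->]]; exact: H.
Qed.

(* Holds for n = 0 too, since / 0 = 0 in the Stdlib reals. *)
Lemma inv_INR_ge0 n : 0 <= / INR n.
Proof.
case: n => [|n]; first by rewrite /= Rinv_0; lra.
by apply/Rlt_le/Rinv_0_lt_compat/lt_0_INR; lia.
Qed.

Lemma mean_slack n (c u : 'I_n -> R) eta : 0 <= eta -> (forall i, c i <= u i + eta) ->
  / INR n * rsum c <= / INR n * rsum u + eta.
Proof.
move=> heta H.
have hsum : rsum c <= rsum u + INR n * eta
  by rewrite -rsum_const -rsum_add; exact: rsum_le.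
case: n c u H hsum => [|n] c u _ hsum; first by rewrite /= Rinv_0; lra.
have hn : 0 < INR n.+1 by apply: lt_0_INR; lia.
have := Rmult_le_compat_l _ _ _ (Rlt_le _ _ (Rinv_0_lt_compat _ hn)) hsum.
by rewrite Rmult_plus_distr_l -Rmult_assoc Rinv_l ?Rmult_1_l //; lra.
Qed.

Theorem mainTheorem6 (m n d : nat) (g : Vec d -> Rbar)
  (hpen : is_penalty g) (hA1 : penA1 g) (hA2 : penA2 g) (hA3 : penA3 g)
  (X : Mat m n) (D : Mat m d) :
  exists fv gv : 'I_n -> R,
    (forall i, fx g (col X i) D = Fin (fv i) /\ gbar g (fv i) = Fin (gv i)) /\
    Rbar_le (LX g X D) (Fin (/ INR n * rsum (fun i => sqrt (2 * fv i) * gv i))) /\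
    Rbar_le (CX g X D) (Fin (/ (2 * INR n) * rsum (fun i => gv i ^ 2))).
Proof.
have hf i := fx_finite hpen hA1 (col X i) D.
pose fv i := proj1_sig (constructive_indefinite_description _ (hf i)).
have hfv i : fx g (col X i) D = Fin (fv i) /\ 0 <= fv i
  := proj2_sig (constructive_indefinite_description _ (hf i)).
have hg i := gbar_finite hA3 (fv i).
pose gv i := proj1_sig (constructive_indefinite_description _ (hg i)).
have hgv i : gbar g (fv i) = Fin (gv i) /\ 0 <= gv i /\
    (forall al, Rbar_le (g al) (Fin (fv i)) -> norm1 al <= gv i)
  := proj2_sig (constructive_indefinite_description _ (hg i)).
exists fv, gv; split; first by move=> i; split; [exact: (hfv i).1 | exact: (hgv i).1].
have uniform eta (heta : 0 < eta) := near_minimizers_bound hpen hA1 hA2 hA3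
  (fun i => (hfv i).1) (fun i => (hfv i).2) (fun i => (hgv i).2.1) (fun i => (hgv i).2.2) heta.
split; apply: Rbar_inf_le => eta heta; have [eps [heps H]] := uniform eta heta;
  (eexists; split; first by exists eps); apply: Rbar_sup_le => _ [A [hA ->]].
- have [s [-> hs]] := dualnorm12_le (frob_residcorr_le X D A).
  apply: Rle_trans (Rmult_le_compat_l _ _ _ (inv_INR_ge0 n) hs) _.
  by apply: mean_slack => [|i]; [lra | exact: (H A hA i).1].
- cbv beta iota delta [Rbar_le]; rewrite Rinv_mult !Rmult_assoc.
  have := mean_slack (c := fun i => norm1 (A i) ^ 2) (Rlt_le _ _ heta) (fun i => (H A hA i).2).
  lra.
Qed.
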